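(* Let $\gamma\in CR_{k,m}$ and $n\in\mathbb{N}$, $n\ge1$. Then $\gamma^n\in CR_{k,m}$ and $\gamma^{1/n}\in CR_{k,m}$ (the unique positive semidefinite $n$-th root). Moreover, the orthogonal projection $\delta$ onto $\mathrm{Im}(\gamma)$ belongs to $CR_{k,m}$.
   Context: $\mathcal{M}_k$ denotes the complex $k\times k$ matrices, and $\mathcal{M}_k\otimes\mathcal{M}_m$ is identified with $\mathcal{M}_{km}$ via the Kronecker product. A state is a positive semidefinite Hermitian matrix (not necessarily of trace one). For $\gamma=\sum_{i=1}^nA_i\otimes B_i\in\mathcal{M}_k\otimes\mathcal{M}_m$ define $G_\gamma:\mathcal{M}_k\to\mathcal{M}_m$, $G_\gamma(X)=\sum_i\mathrm{tr}(A_iX)B_i$, and $F_\gamma:\mathcal{M}_m\to\mathcal{M}_k$, $F_\gamma(Y)=\sum_i\mathrm{tr}(B_iY)A_i$. A linear map is positive if it maps positive semidefinite matrices to positive semidefinite matrices, and self-adjoint if self-adjoint with respect to $\langle X,Y\rangle=\mathrm{tr}(XY^* )$. For orthogonal projections $V,W$, $V\mathcal{M}_kW=\{VXW:X\in\mathcal{M}_k\}$. Given an orthogonal projection $V\in\mathcal{M}_k$ and a positive map $T:V\mathcal{M}_kV\to V\mathcal{M}_kV$, $T$ is irreducible if the only orthogonal projections $W$ with $W\mathcal{M}_kW\subseteq V\mathcal{M}_kV$ and $T(W\mathcal{M}_kW)\subseteq W\mathcal{M}_kW$ are $W=0$ and $W=V$. A self-adjoint positive map $T:\mathcal{M}_k\to\mathcal{M}_k$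 is completely reducible if there are orthogonal projections $W_1,\dots,W_l$ with $W_iW_j=0$ for $i\ne j$, $T(W_i\mathcal{M}_kW_i)\subseteq W_i\mathcal{M}_kW_i$ and $T|_{W_i\mathcal{M}_kW_i}$ irreducible for every $i$, and $T|_R\equiv0$, where $R$ is the orthogonal complement (trace inner product) of $\bigoplus_iW_i\mathcal{M}_kW_i$ in $\mathcal{M}_k$. $CR_{k,m}$ is the set of states $\gamma\in\mathcal{M}_k\otimes\mathcal{M}_m$ such that $F_\gamma\circ G_\gamma:\mathcal{M}_k\to\mathcal{M}_k$ is completely reducible. *)

(* Complex numbers are  R[i]  (mathcomp-real-closed's complex)
   over an arbitrary  R : realType  (so R[i] is the field of complex numbers). *)
From HB Require Import structures.
From mathcomp Require Import all_boot all_order all_algebra.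
From mathcomp Require Import complex mxtens.
From mathcomp Require Import reals.
Set Implicit Arguments. Unset Strict Implicit. Unset Printing Implicit Defensive.
Import Order.TTheory GRing.Theory Num.Theory.
Local Open Scope ring_scope.

Section Defs.
Variable C : numClosedFieldType.

Definition adjmx {p q : nat} (A : 'M[C]_(p, q)) : 'M[C]_(q, p) :=
  (map_mx Num.conj A)^T.

(* a state: positive semidefinite Hermitian matrix (trace not normalized) *)
Definition psd {p : nat} (A : 'M[C]_p) : Prop :=
  adjmx A = A /\ forall v : 'cV[C]_p, 0 <= (adjmx v *m A *m v) 0 0.

Definition orth_proj {p : nat} (P : 'M[C]_p) : Prop :=
  P *m P = P /\ adjmx P = P.

Definition mxdot {p : nat} (X Y : 'M[C]_p) : C := \tr (X *m adjmx Y).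

(* gamma in M_k (x) M_m = M_(k*m) (Kronecker identification via mxtens_index,
   the convention of  tensmx  ( *t ) ).  Its canonical decomposition is
   gamma = \sum_(i,j) E_ij *t block gamma i j ,  with E_ij = delta_mx i j.   *)
Definition block {k m : nat} (g : 'M[C]_(k * m)) (i j : 'I_k) : 'M[C]_m :=
  \matrix_(a, b) g (mxtens_index (i, a)) (mxtens_index (j, b)).

Definition Gmap {k m : nat} (g : 'M[C]_(k * m)) (X : 'M[C]_k) : 'M[C]_m :=
  \sum_(i < k) \sum_(j < k) \tr (delta_mx i j *m X) *: block g i j.

Definition Fmap {k m : nat} (g : 'M[C]_(k * m)) (Y : 'M[C]_m) : 'M[C]_k :=
  \sum_(i < k) \sum_(j < k) \tr (block g i j *m Y) *: delta_mx i j.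

Definition positive_map {p q : nat} (T : 'M[C]_p -> 'M[C]_q) : Prop :=
  forall X, psd X -> psd (T X).

Definition selfadjoint_map {p : nat} (T : 'M[C]_p -> 'M[C]_p) : Prop :=
  forall X Y, mxdot (T X) Y = mxdot X (T Y).

Definition in_corner {p : nat} (V W X : 'M[C]_p) : Prop :=
  exists Y, X = V *m Y *m W.

Definition irreducible_on {p : nat} (T : 'M[C]_p -> 'M[C]_p) (V : 'M[C]_p)
  : Prop :=
  forall W : 'M[C]_p, orth_proj W ->
    (forall X, in_corner V V (W *m X *m W)) ->
    (forall X, in_corner W W (T (W *m X *m W))) ->
    W = 0 \/ W = V.

Definition completely_reducible {p : nat} (T : 'M[C]_p -> 'M[C]_p) : Prop :=
  selfadjoint_map T /\ positive_map T /\
  exists (l : nat) (W : 'I_l -> 'M[C]_p),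
    [/\ (forall i, orth_proj (W i)),
        (forall i j, i != j -> W i *m W j = 0),
        (forall i X, in_corner (W i) (W i) (T (W i *m X *m W i))),
        (forall i, irreducible_on T (W i)) &
        (forall X, (forall i Y, mxdot X (W i *m Y *m W i) = 0) -> T X = 0)].

Definition CR (k m : nat) (g : 'M[C]_(k * m)) : Prop :=
  psd g /\ completely_reducible (fun X => Fmap g (Gmap g X)).

End Defs.

From HB Require Import structures.
From mathcomp Require Import all_boot all_order all_algebra.
From mathcomp Require Import complex mxtens.
From mathcomp Require Import reals.
From mathcomp Require Import sesquilinear spectral.
Set Implicit Arguments. Unset Strict Implicit. Unset Printing Implicit Defensive.
Import Order.TTheory GRing.Theory Num.Theory.
Local Open Scope ring_scope.

(* Write T = F_gamma o G_gamma.  Both maps are partial pairings of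
   (X, Y) |-> tr(gamma (X (x) Y)), and tr(X^* T(X)) = tr(G(X)^* G(X)).  With these
   identities every condition in the definition of CR only involves the kernel
   of gamma and the orthogonal projections commuting with gamma:
   - W M W is T-invariant iff gamma (W (x) (1 - Q)) = 0 = gamma ((1 - W) (x) Q)
     for some projection Q (the range projection of G(W));
   - T vanishes off (+)_i W_i M W_i whenever gamma ((1 - sum_i W_i) (x) 1) = 0
     and gamma commutes with every W_i (x) 1, and both conditions hold when the
     W_i witness gamma in CR.
   Hence the witnesses of gamma in CR also witness gamma' in CR for any psd
   gamma' with the kernel of gamma that commutes with every projection commuting
   with gamma.  The powers of gamma, its psd n-th roots (r is the only psd n-th
   root of r^n) and its range projection are such matrices. *)

Section Adjoint.
Variable C : numClosedFieldType.

Lemma adjmxE p q (A : 'M[C]_(p, q)) i j : adjmx A i j = (A j i)^*.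
Proof. by rewrite !mxE. Qed.

Lemma adjmxK p q (A : 'M[C]_(p, q)) : adjmx (adjmx A) = A.
Proof. by apply/matrixP=> i j; rewrite !adjmxE conjCK. Qed.

Lemma adjmxM p q r (A : 'M[C]_(p, q)) (B : 'M[C]_(q, r)) :
  adjmx (A *m B) = adjmx B *m adjmx A.
Proof. by rewrite /adjmx map_mxM trmx_mul. Qed.

Lemma adjmxD p q (A B : 'M[C]_(p, q)) : adjmx (A + B) = adjmx A + adjmx B.
Proof. by rewrite /adjmx map_mxD linearD. Qed.

Lemma adjmxB p q (A B : 'M[C]_(p, q)) : adjmx (A - B) = adjmx A - adjmx B.
Proof. by rewrite /adjmx map_mxB linearB. Qed.

Lemma adjmx0 p q : adjmx (0 : 'M[C]_(p, q)) = 0.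
Proof. by rewrite /adjmx map_mx0 trmx0. Qed.

Lemma adjmx1 p : adjmx (1%:M : 'M[C]_p) = 1%:M.
Proof. by rewrite /adjmx map_mx1 trmx1. Qed.

Lemma adjmx_sum p q I (r : seq I) (P : pred I) (F : I -> 'M[C]_(p, q)) :
  adjmx (\sum_(i <- r | P i) F i) = \sum_(i <- r | P i) adjmx (F i).
Proof. by elim/big_rec2: _ => [|i y1 y2 _ <-]; rewrite ?adjmx0 ?adjmxD. Qed.

Lemma adjmx_trmxC p q (A : 'M[C]_(p, q)) : (A ^t* )%sesqui = adjmx A.
Proof. by apply/matrixP=> i j; rewrite !mxE. Qed.

Lemma adjmx_diag p (d : 'rV[C]_p) : adjmx (diag_mx d) = diag_mx (map_mx Num.conj d).
Proof. by rewrite /adjmx map_diag_mx tr_diag_mx. Qed.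

Lemma adjmx_tens p q r s (A : 'M[C]_(p, q)) (B : 'M[C]_(r, s)) :
  adjmx (A *t B) = adjmx A *t adjmx B.
Proof. by apply/matrixP=> i j; rewrite !mxE rmorphM. Qed.

Lemma herm_mxE p (A : 'M[C]_p) : adjmx A = A -> forall i j, A i j = (A j i)^*.
Proof. by move=> A' i j; rewrite -{1}A' mxE mxE. Qed.

Lemma herm_mulmx_eq0C p (A P : 'M[C]_p) :
  adjmx A = A -> adjmx P = P -> A *m P = 0 -> P *m A = 0.
Proof. by move=> A' P' AP0; rewrite -A' -P' -adjmxM AP0 adjmx0. Qed.

End Adjoint.

Section PositiveSemidefinite.
Variable C : numClosedFieldType.

Lemma adj_mulmx_ge0 p (w : 'cV[C]_p) : 0 <= (adjmx w *m w) 0 0.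
Proof.
by rewrite mxE; apply: sumr_ge0 => s _; rewrite !mxE mulrC mul_conjC_ge0.
Qed.

Lemma adj_mulmx_eq0 p (w : 'cV[C]_p) : (adjmx w *m w) 0 0 = 0 -> w = 0.
Proof.
rewrite mxE => w0; apply/matrixP=> s j; rewrite ord1 mxE.
have ge0 i : predT i -> 0 <= adjmx w 0 i * w i 0.
  by rewrite !mxE mulrC mul_conjC_ge0.
move: (psumr_eq0P ge0 w0 (i := s) isT); rewrite !mxE mulrC => /eqP.
by rewrite mul_conjC_eq0 => /eqP.
Qed.

Lemma psd_mulmx_adj p q (B : 'M[C]_(p, q)) : psd (B *m adjmx B).
Proof.
split=> [|v]; first by rewrite adjmxM adjmxK.
have -> : adjmx v *m (B *m adjmx B) *m v = adjmx (adjmx B *m v) *m (adjmx B *m v).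
  by rewrite adjmxM adjmxK !mulmxA.
exact: adj_mulmx_ge0.
Qed.

Lemma psd_spectral p (A : 'M[C]_p) : psd A ->
  exists (U : 'M[C]_p) (d : 'rV[C]_p),
  [/\ U *m adjmx U = 1%:M, adjmx U *m U = 1%:M,
      A = adjmx U *m diag_mx d *m U & forall s, 0 <= d 0 s].
Proof.
move=> [A_herm A_ge0].
have /orthomx_spectralP eA : A \is normalmx by rewrite qualifE !adjmx_trmxC A_herm.
set U := spectralmx A in eA; set d := spectral_diag A in eA.
have uU : U \is unitarymx by apply: spectral_unitarymx.
have UU' : U *m adjmx U = 1%:M by rewrite -adjmx_trmxC; apply/unitarymxP.
have U'U : adjmx U *m U = 1%:M.
  by rewrite -adjmx_trmxC -invmx_unitary // mulVmx // unitarymx_unit.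
rewrite invmx_unitary // adjmx_trmxC in eA.
exists U, d; split=> // s.
have := A_ge0 (adjmx U *m delta_mx s 0).
have -> : adjmx (adjmx U *m (delta_mx s 0 : 'cV_p)) = delta_mx 0 s *m U.
  by rewrite adjmxM adjmxK /adjmx map_delta_mx trmx_delta.
rewrite eA !mulmxA -!(mulmxA _ U (adjmx U)) UU' !mulmx1.
by rewrite -rowE -colE !mxE eqxx mulr1n.
Qed.

Section UnitaryDiagonal.
Variables (p : nat) (U : 'M[C]_p).
Hypotheses (UU' : U *m adjmx U = 1%:M) (U'U : adjmx U *m U = 1%:M).

Definition udiag (a : 'rV[C]_p) := adjmx U *m diag_mx a *m U.

Lemma udiagM (a b : 'rV[C]_p) : udiag a *m udiag b = udiag (\row_j (a 0 j * b 0 j)).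
Proof.
rewrite /udiag -!mulmxA; congr (_ *m _).
by rewrite [U *m (adjmx U *m _)]mulmxA UU' mul1mx mulmxA mulmx_diag.
Qed.

Lemma adjmx_udiag (a : 'rV[C]_p) : adjmx (udiag a) = udiag (map_mx Num.conj a).
Proof. by rewrite /udiag !adjmxM adjmxK adjmx_diag mulmxA. Qed.

Lemma udiag_psd (a : 'rV[C]_p) : (forall s, 0 <= a 0 s) -> psd (udiag a).
Proof.
move=> a_ge0; split.
  rewrite adjmx_udiag; congr udiag; apply/matrixP=> i j.
  by rewrite mxE ord1 geC0_conj.
move=> v; have -> : adjmx v *m udiag a *m v = adjmx (U *m v) *m diag_mx a *m (U *m v).
  by rewrite /udiag adjmxM !mulmxA.
rewrite mul_mx_diag mxE; apply: sumr_ge0 => s _; rewrite !mxE.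
by rewrite mulrAC mulrC mulr_ge0 // mulrC mul_conjC_ge0.
Qed.

Lemma udiagX (a : 'rV[C]_p) n : udiag a ^+ n = udiag (map_mx (fun x => x ^+ n) a).
Proof.
elim: n => [|n IHn].
  rewrite expr0 /udiag; have -> : diag_mx (map_mx (fun x => x ^+ 0) a) = 1%:M.
    by apply/matrixP=> i j; rewrite !mxE expr0.
  by rewrite mulmx1 U'U.
rewrite exprS IHn -mulmxE udiagM; congr udiag; apply/matrixP=> i j.
by rewrite !mxE ord1 exprS.
Qed.

End UnitaryDiagonal.

Lemma psd_factor p (A : 'M[C]_p) : psd A -> exists Y : 'M[C]_p, A = Y *m adjmx Y.
Proof.
move=> /psd_spectral [U [d [_ _ -> d_ge0]]].
exists (adjmx U *m diag_mx (map_mx sqrtC d)).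
rewrite adjmxM adjmxK adjmx_diag -!mulmxA; congr (_ *m _).
rewrite !mulmxA mulmx_diag; congr (_ *m _); congr diag_mx.
apply/matrixP=> i j; rewrite !mxE ord1 geC0_conj ?sqrtC_ge0 //.
by rewrite -expr2 sqrtCK.
Qed.

Lemma psdX p (A : 'M[C]_p) n : psd A -> psd (A ^+ n).
Proof.
move=> /psd_spectral [U [d [UU' U'U -> d_ge0]]].
by rewrite -/(udiag U d) udiagX //; apply: udiag_psd => s; rewrite mxE exprn_ge0.
Qed.

Lemma psd_root_exists p (A : 'M[C]_p) n : (0 < n)%N -> psd A ->
  exists r, psd r /\ r ^+ n = A.
Proof.
move=> n_gt0 /psd_spectral [U [d [UU' U'U -> d_ge0]]].
exists (udiag U (map_mx (fun x => n.-root x) d)); split.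
  by apply: udiag_psd => // s; rewrite mxE rootC_ge0.
by rewrite udiagX //; congr udiag; apply/matrixP=> i j; rewrite !mxE rootCK.
Qed.

Lemma psd_range_proj p (A : 'M[C]_p) : psd A ->
  exists Q, [/\ orth_proj Q, Q *m A = A & exists S, Q = A *m S].
Proof.
move=> /psd_spectral [U [d [UU' U'U -> _]]].
exists (udiag U (\row_j ((d 0 j != 0)%:R : C))); split.
- split.
    rewrite udiagM //; congr udiag; apply/matrixP=> i j; rewrite !mxE.
    by case: (_ != 0); rewrite ?mulr1 ?mulr0.
  rewrite adjmx_udiag //; congr udiag; apply/matrixP=> i j; rewrite !mxE.
  by case: (_ != 0); rewrite /= ?rmorph1 ?rmorph0.
- rewrite -/(udiag U d) udiagM //; congr udiag; apply/matrixP=> i j.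
  rewrite !mxE ord1.
  by have [->|] := eqVneq (d 0 j) 0; rewrite ?mulr1 ?mulr0 ?mul1r.
- exists (udiag U (map_mx GRing.inv d)); rewrite -/(udiag U d) udiagM //.
  congr udiag; apply/matrixP=> i j; rewrite !mxE.
  by have [->|d_neq0] := eqVneq (d 0 j) 0; rewrite ?invr0 ?mulr0 ?divff.
Qed.

Lemma diag_mx_commX p (M : 'M[C]_p) (d : 'rV[C]_p) n : (0 < n)%N ->
  (forall s, 0 <= d 0 s) ->
  M *m diag_mx (map_mx (fun x => x ^+ n) d) =
    diag_mx (map_mx (fun x => x ^+ n) d) *m M ->
  M *m diag_mx d = diag_mx d *m M.
Proof.
move=> n_gt0 d_ge0 /matrixP commMdn; apply/matrixP=> i j.
move: (commMdn i j); rewrite !mul_mx_diag !mul_diag_mx !mxE.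
have [->|Mij_neq0] := eqVneq (M i j) 0; first by rewrite !(mulr0, mul0r).
move/eqP; rewrite mulrC (inj_eq (mulIf Mij_neq0)) eqrXn2 // => /eqP ->.
by rewrite mulrC.
Qed.

(* In an eigenbasis of r this is x ^+ n = y ^+ n -> x = y for x, y >= 0. *)
Lemma psd_root_comm p (r P : 'M[C]_p) n : (0 < n)%N -> psd r ->
  P *m r ^+ n = r ^+ n *m P -> P *m r = r *m P.
Proof.
move=> n_gt0 /psd_spectral [U [d [UU' U'U -> d_ge0]]].
rewrite -/(udiag U d) udiagX // /udiag => commPrn.
have conjK (X : 'M[C]_p) : adjmx U *m (U *m X *m adjmx U) *m U = X.
  by rewrite !mulmxA U'U mul1mx -mulmxA U'U mulmx1.
have commP'd : U *m P *m adjmx U *m diag_mx d = diag_mx d *m (U *m P *m adjmx U).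
  apply: diag_mx_commX n_gt0 d_ge0 _.
  move: (congr1 (fun M => U *m M *m adjmx U) commPrn) => /=.
  by rewrite !mulmxA UU' mul1mx -!mulmxA !UU' !mulmx1 !mulmxA.
rewrite -(conjK P); move: commP'd; set P' := U *m P *m adjmx U; clearbody P' => commP'd.
rewrite !mulmxA -!(mulmxA _ U (adjmx U)) UU' !mulmx1.
by rewrite -(mulmxA _ P') commP'd mulmxA.
Qed.

End PositiveSemidefinite.

Section TraceForm.
Variable C : numClosedFieldType.

Lemma mxtrace_delta_mul p (i j : 'I_p) (X : 'M[C]_p) : \tr (delta_mx i j *m X) = X j i.
Proof.
by rewrite -(mul_delta_mx (0 : 'I_1)) -mulmxA mxtrace_mulC -rowE -colE trace_mx11 !mxE.
Qed.

Lemma eq0_mxtrace_mul p (M : 'M[C]_p) : (forall N, \tr (M *m N) = 0) -> M = 0.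
Proof.
move=> trM0; apply/matrixP=> i j.
by rewrite mxE -(mxtrace_delta_mul j i M) mxtrace_mulC trM0.
Qed.

Lemma quad_form_mxtrace p (M : 'M[C]_p) (v : 'cV[C]_p) :
  (adjmx v *m M *m v) 0 0 = \tr (M *m (v *m adjmx v)).
Proof. by rewrite mulmxA mxtrace_mulC trace_mx11 mulmxA. Qed.

Lemma quad_form_col p q (A : 'M[C]_p) (B : 'M[C]_(p, q)) s :
  (adjmx B *m A *m B) s s = (adjmx (col s B) *m A *m col s B) 0 0.
Proof.
rewrite colE adjmxM (_ : adjmx _ = delta_mx 0 s); last first.
  by rewrite /adjmx map_delta_mx trmx_delta.
by rewrite -rowE !mulmxA -!row_mul -colE !mxE.
Qed.

Lemma psd_mxtrace_ge0 p q (A : 'M[C]_p) (B : 'M[C]_(p, q)) :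
  psd A -> 0 <= \tr (A *m (B *m adjmx B)).
Proof.
move=> [_ pA]; rewrite mulmxA mxtrace_mulC mulmxA /mxtrace.
by apply: sumr_ge0 => s _; rewrite quad_form_col.
Qed.

Lemma psd_quad_form_eq0 p (A : 'M[C]_p) (v : 'cV[C]_p) :
  psd A -> (adjmx v *m A *m v) 0 0 = 0 -> A *m v = 0.
Proof.
move=> /psd_factor [Y ->] vAv0.
have Y'v0 : adjmx Y *m v = 0.
  by apply: adj_mulmx_eq0; move: vAv0; rewrite adjmxM adjmxK !mulmxA.
by rewrite -mulmxA Y'v0 mulmx0.
Qed.

Lemma psd_mxtrace_eq0 p q (A : 'M[C]_p) (B : 'M[C]_(p, q)) :
  psd A -> \tr (A *m (B *m adjmx B)) = 0 -> A *m B = 0.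
Proof.
move=> psdA; rewrite mulmxA mxtrace_mulC mulmxA /mxtrace => tr0.
have ge0 s : predT s -> 0 <= (adjmx B *m A *m B) s s.
  by rewrite quad_form_col; case: psdA.
apply/matrixP=> i s; rewrite mxE.
move: (psumr_eq0P ge0 tr0 (i := s) isT); rewrite quad_form_col.
move=> /(psd_quad_form_eq0 psdA) /matrixP /(_ i 0).
by rewrite colE mulmxA -colE !mxE.
Qed.

Lemma psd_mul_eq0 p (A B : 'M[C]_p) :
  psd A -> psd B -> \tr (A *m B) = 0 -> A *m B = 0.
Proof.
move=> psdA /psd_factor [Y ->] /(psd_mxtrace_eq0 psdA) AY0.
by rewrite mulmxA AY0 mul0mx.
Qed.

Lemma mxtrace_mul_adj_eq0 p q (B : 'M[C]_(p, q)) : \tr (B *m adjmx B) = 0 -> B = 0.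
Proof.
have psd1 : psd (1%:M : 'M[C]_p).
  by rewrite -(mulmx1 1%:M) -{2}adjmx1; apply: psd_mulmx_adj.
by move=> trB0; rewrite -[B]mul1mx; apply: psd_mxtrace_eq0 psd1 _; rewrite mul1mx.
Qed.

End TraceForm.

Section OrthogonalProjection.
Variable C : numClosedFieldType.
Implicit Types p q : nat.

Lemma orth_proj_herm p (P : 'M[C]_p) : orth_proj P -> adjmx P = P.
Proof. by case. Qed.

Lemma orth_proj_mul_adj p (P : 'M[C]_p) : orth_proj P -> P = P *m adjmx P.
Proof. by move=> [PP P']; rewrite P' PP. Qed.

Lemma orth_proj_psd p (P : 'M[C]_p) : orth_proj P -> psd P.
Proof. by move=> /orth_proj_mul_adj ->; apply: psd_mulmx_adj. Qed.

Lemma orth_proj1 p : orth_proj (1%:M : 'M[C]_p).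
Proof. by split; rewrite ?mulmx1 ?adjmx1. Qed.

Lemma orth_proj_compl p (P : 'M[C]_p) : orth_proj P -> orth_proj (1%:M - P).
Proof.
move=> [PP P']; split; last by rewrite adjmxB adjmx1 P'.
by rewrite mulmxBl !mulmxBr !mul1mx mulmx1 PP subrr subr0.
Qed.

Lemma orth_proj_tens p q (A : 'M[C]_p) (B : 'M[C]_q) :
  orth_proj A -> orth_proj B -> orth_proj (A *t B).
Proof.
move=> [AA A'] [BB B']; split; first by rewrite tensmx_mul AA BB.
by rewrite adjmx_tens A' B'.
Qed.

Section OrthogonalFamily.
Variables (p l : nat) (W : 'I_l -> 'M[C]_p).
Hypotheses (W_proj : forall i, orth_proj (W i))
           (W_orth : forall i j, i != j -> W i *m W j = 0).

Lemma sum_orth_proj_mull i : (\sum_j W j) *m W i = W i.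
Proof.
rewrite mulmx_suml (bigD1 i) //= (W_proj i).1 big1 ?addr0 // => j.
exact: W_orth.
Qed.

Lemma sum_orth_proj_mulr i : W i *m (\sum_j W j) = W i.
Proof.
rewrite mulmx_sumr (bigD1 i) //= (W_proj i).1 big1 ?addr0 // => j.
by rewrite eq_sym; apply: W_orth.
Qed.

Lemma orth_proj_sum : orth_proj (\sum_j W j).
Proof.
split; first by rewrite mulmx_suml; apply: eq_bigr => i _; rewrite sum_orth_proj_mulr.
by rewrite adjmx_sum; apply: eq_bigr => i _; rewrite orth_proj_herm.
Qed.

End OrthogonalFamily.

End OrthogonalProjection.

Section Tensor.
Variable C : numClosedFieldType.

Lemma tensmxDl p q r s (A B : 'M[C]_(p, q)) (M : 'M[C]_(r, s)) :
  (A + B) *t M = A *t M + B *t M.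
Proof. by apply/matrixP=> i j; rewrite !mxE mulrDl. Qed.

Lemma tensmx_suml p q r s I (rr : seq I) (P : pred I) (F : I -> 'M[C]_(p, q))
  (M : 'M[C]_(r, s)) :
  (\sum_(i <- rr | P i) F i) *t M = \sum_(i <- rr | P i) F i *t M.
Proof. by elim/big_rec2: _ => [|i y1 y2 _ <-]; rewrite ?tens0mx ?tensmxDl. Qed.

Lemma tensmx11 p q : (1%:M : 'M[C]_p) *t (1%:M : 'M[C]_q) = 1%:M.
Proof.
apply/matrixP=> x y.
case: (mxtens_indexP x) => i a; case: (mxtens_indexP y) => j b.
rewrite tensmxE !mxE (inj_eq (can_inj (@mxtens_indexK p q))) xpair_eqE.
by case: (i == j); case: (a == b); rewrite /= ?mulr1 ?mulr0.
Qed.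

Lemma tensmx_delta p q (i j : 'I_p) (a b : 'I_q) :
  (delta_mx i j : 'M[C]_p) *t (delta_mx a b : 'M[C]_q) =
  delta_mx (mxtens_index (i, a)) (mxtens_index (j, b)).
Proof.
apply/matrixP=> x y.
case: (mxtens_indexP x) => i' a'; case: (mxtens_indexP y) => j' b'.
rewrite tensmxE !mxE !(inj_eq (can_inj (@mxtens_indexK p q))) !xpair_eqE.
by case: (i' == i); case: (j' == j); case: (a' == a); case: (b' == b);
  rewrite /= ?mulr1 ?mulr0.
Qed.

Lemma eq0_mxtrace_mul_tens p q (M : 'M[C]_(p * q)) :
  (forall (X : 'M[C]_p) (Y : 'M[C]_q), \tr (M *m (X *t Y)) = 0) -> M = 0.
Proof.
move=> trM0; apply/matrixP=> x y; rewrite mxE.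
case: (mxtens_indexP x) => i a; case: (mxtens_indexP y) => j b.
by rewrite -mxtrace_delta_mul mxtrace_mulC -tensmx_delta trM0.
Qed.

Lemma sum_mxtens p q (F : 'I_(p * q) -> C) :
  \sum_(x < p * q) F x = \sum_(i < p) \sum_(a < q) F (mxtens_index (i, a)).
Proof.
rewrite pair_big /=; apply: reindex.
exists (@mxtens_unindex p q) => [[i a]|x] _ /=; first by rewrite mxtens_indexK.
exact: mxtens_unindexK.
Qed.

End Tensor.

Section Channels.
Variables (C : numClosedFieldType) (k m : nat).
Implicit Types (g : 'M[C]_(k * m)) (X : 'M[C]_k) (Y : 'M[C]_m).

Lemma FmapE g Y : Fmap g Y = \matrix_(i, j) \tr (block g i j *m Y).
Proof.
rewrite [RHS]matrix_sum_delta; apply: eq_bigr => i _; apply: eq_bigr => j _.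
by rewrite mxE.
Qed.

Lemma GmapE g X a b : Gmap g X a b =
  \sum_(i < k) \sum_(j < k) X j i * g (mxtens_index (i, a)) (mxtens_index (j, b)).
Proof.
rewrite /Gmap summxE; apply: eq_bigr => i _; rewrite summxE; apply: eq_bigr => j _.
by rewrite !mxE mxtrace_delta_mul.
Qed.

Lemma mxtrace_block_mul g i j Y : \tr (block g i j *m Y) =
  \sum_(a < m) \sum_(b < m) g (mxtens_index (i, a)) (mxtens_index (j, b)) * Y b a.
Proof.
rewrite /mxtrace; apply: eq_bigr => a _; rewrite mxE.
by apply: eq_bigr => b _; rewrite mxE.
Qed.

Lemma mxtrace_mul_tens g X Y :
  \tr (g *m (X *t Y)) = \sum_(i < k) \sum_(j < k) X j i * \tr (block g i j *m Y).
Proof.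
rewrite /mxtrace sum_mxtens; apply: eq_bigr => i _.
under eq_bigr => a _ do rewrite mxE sum_mxtens.
under eq_bigr => a _ do under eq_bigr => j _ do under eq_bigr => b _ do rewrite tensmxE.
under [RHS]eq_bigr => j _ do rewrite mulr_sumr.
rewrite [RHS]exchange_big; apply: eq_bigr => a _; apply: eq_bigr => j _.
rewrite mxE mulr_sumr; apply: eq_bigr => b _.
by rewrite mxE !mulrA [_ * X j i]mulrC.
Qed.

Lemma mxtrace_Gmap_mul g X Y : \tr (Gmap g X *m Y) = \tr (g *m (X *t Y)).
Proof.
rewrite mxtrace_mul_tens /Gmap mulmx_suml raddf_sum; apply: eq_bigr => i _.
rewrite mulmx_suml raddf_sum; apply: eq_bigr => j _.
by rewrite /= -scalemxAl mxtraceZ mxtrace_delta_mul.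
Qed.

Lemma mxtrace_mul_Fmap g X Y : \tr (X *m Fmap g Y) = \tr (g *m (X *t Y)).
Proof.
rewrite mxtrace_mul_tens FmapE mxtrace_mulC {1}/mxtrace; apply: eq_bigr => i _.
by rewrite mxE; apply: eq_bigr => j _; rewrite !mxE mulrC.
Qed.

Lemma adjmx_Gmap g X : adjmx g = g -> adjmx (Gmap g X) = Gmap g (adjmx X).
Proof.
move=> g_herm; apply/matrixP => a b; rewrite adjmxE !GmapE rmorph_sum /=.
rewrite [RHS]exchange_big; apply: eq_bigr => i _; rewrite rmorph_sum.
apply: eq_bigr => j _; rewrite rmorphM /= !mxE; congr (_ * _).
by rewrite (herm_mxE g_herm (mxtens_index (j, a))).
Qed.

Lemma adjmx_Fmap g Y : adjmx g = g -> adjmx (Fmap g Y) = Fmap g (adjmx Y).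
Proof.
move=> g_herm; apply/matrixP => i j.
rewrite adjmxE !FmapE !mxE !mxtrace_block_mul rmorph_sum /=.
rewrite [RHS]exchange_big; apply: eq_bigr => a _; rewrite rmorph_sum.
apply: eq_bigr => b _; rewrite rmorphM /= !mxE; congr (_ * _).
by rewrite (herm_mxE g_herm (mxtens_index (i, b))).
Qed.

Lemma Gmap_psd g X : psd g -> psd X -> psd (Gmap g X).
Proof.
move=> psdg psdX; split; first by rewrite adjmx_Gmap; [case: psdX => -> | case: psdg].
move=> v; rewrite quad_form_mxtrace mxtrace_Gmap_mul.
have [Y ->] := psd_factor psdX.
by rewrite -tensmx_mul -adjmx_tens psd_mxtrace_ge0.
Qed.

Lemma Fmap_psd g Y : psd g -> psd Y -> psd (Fmap g Y).
Proof.
move=> psdg psdY; split; first by rewrite adjmx_Fmap; [case: psdY => -> | case: psdg].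
move=> v; rewrite quad_form_mxtrace mxtrace_mulC mxtrace_mul_Fmap.
have [Z ->] := psd_factor psdY.
by rewrite -tensmx_mul -adjmx_tens psd_mxtrace_ge0.
Qed.

Lemma FG_positive g : psd g -> positive_map (fun X => Fmap g (Gmap g X)).
Proof. by move=> psdg X psdX; apply/Fmap_psd/Gmap_psd. Qed.

Lemma FG_selfadjoint g : adjmx g = g -> selfadjoint_map (fun X => Fmap g (Gmap g X)).
Proof.
move=> g_herm X Y; rewrite /mxdot mxtrace_mulC mxtrace_mul_Fmap -mxtrace_Gmap_mul.
by rewrite adjmx_Fmap // adjmx_Gmap // mxtrace_mul_Fmap -mxtrace_Gmap_mul mxtrace_mulC.
Qed.

(* tr(X^* F(G X)) = tr(G(X)^* G(X)) *)
Lemma Gmap_eq0 g X : adjmx g = g -> Fmap g (Gmap g X) = 0 -> Gmap g X = 0.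
Proof.
move=> g_herm FGX0; apply: mxtrace_mul_adj_eq0.
have := congr1 (fun M => \tr (adjmx X *m M)) FGX0; rewrite /= mulmx0 mxtrace0.
by rewrite mxtrace_mul_Fmap -mxtrace_Gmap_mul -adjmx_Gmap // mxtrace_mulC.
Qed.

End Channels.

Lemma corner_of_compl_eq0 (R : pzRingType) p (Q Z : 'M[R]_p) :
  (1%:M - Q) *m Z = 0 -> Z *m (1%:M - Q) = 0 -> Z = Q *m Z *m Q.
Proof.
rewrite mulmxBl mulmxBr mul1mx mulmx1 => /subr0_eq QZ /subr0_eq ZQ.
by rewrite -QZ -ZQ.
Qed.

Definition corner_invariant (C : numClosedFieldType) p
  (T : 'M[C]_p -> 'M[C]_p) (W : 'M[C]_p) :=
  forall X, in_corner W W (T (W *m X *m W)).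

Section CornerInvariance.
Variables (C : numClosedFieldType) (k m : nat).
Implicit Types (g : 'M[C]_(k * m)) (W : 'M[C]_k) (Q : 'M[C]_m).

Definition ker_split g W Q :=
  g *m (W *t (1%:M - Q)) = 0 /\ g *m ((1%:M - W) *t Q) = 0.

Lemma Gmap_corner g W Q X : adjmx g = g -> orth_proj W -> orth_proj Q ->
  g *m (W *t (1%:M - Q)) = 0 ->
  Gmap g (W *m X *m W) = Q *m Gmap g (W *m X *m W) *m Q.
Proof.
move=> g_herm oW oQ gWQ'0.
have WQ'g0 := herm_mulmx_eq0C g_herm
  (orth_proj_herm (orth_proj_tens oW (orth_proj_compl oQ))) gWQ'0.
apply: corner_of_compl_eq0; apply: eq0_mxtrace_mul => N.
  rewrite -[_ *m _ *m N]mulmxA mxtrace_mulC -[Gmap _ _ *m N *m _]mulmxA.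
  rewrite mxtrace_Gmap_mul -tensmx_mul mulmxA mxtrace_mulC mulmxA WQ'g0.
  by rewrite mul0mx mxtrace0.
rewrite -[Gmap _ _ *m _ *m N]mulmxA mxtrace_Gmap_mul -[W *m X *m W]mulmxA.
by rewrite -tensmx_mul mulmxA gWQ'0 mul0mx mxtrace0.
Qed.

Lemma Fmap_corner g W Q Y : adjmx g = g -> orth_proj W -> orth_proj Q ->
  g *m ((1%:M - W) *t Q) = 0 ->
  Fmap g (Q *m Y *m Q) = W *m Fmap g (Q *m Y *m Q) *m W.
Proof.
move=> g_herm oW oQ gW'Q0.
have W'Qg0 := herm_mulmx_eq0C g_herm
  (orth_proj_herm (orth_proj_tens (orth_proj_compl oW) oQ)) gW'Q0.
apply: corner_of_compl_eq0; apply: eq0_mxtrace_mul => N.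
  rewrite mxtrace_mulC mulmxA (mxtrace_mul_Fmap g) -tensmx_mul.
  by rewrite mulmxA mxtrace_mulC mulmxA W'Qg0 mul0mx mxtrace0.
rewrite -[Fmap _ _ *m _ *m N]mulmxA mxtrace_mulC (mxtrace_mul_Fmap g).
rewrite -[Q *m Y *m Q]mulmxA -tensmx_mul.
by rewrite mulmxA gW'Q0 mul0mx mxtrace0.
Qed.

Lemma corner_invariant_of_split g W Q : adjmx g = g -> orth_proj W -> orth_proj Q ->
  ker_split g W Q -> corner_invariant (fun X => Fmap g (Gmap g X)) W.
Proof.
move=> g_herm oW oQ [gWQ'0 gW'Q0] X.
rewrite (Gmap_corner X g_herm oW oQ gWQ'0).
by eexists; apply: Fmap_corner.
Qed.

(* Q is the range projection of G(W): since F(G W) lies in W M W, the two psd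
   matrices G(1 - W) and G(W) have trace-orthogonal product, hence G(1 - W) Q = 0. *)
Lemma split_of_corner_invariant g W : psd g -> orth_proj W ->
  corner_invariant (fun X => Fmap g (Gmap g X)) W ->
  exists2 Q, orth_proj Q & ker_split g W Q.
Proof.
move=> psdg oW inv; have oW' := orth_proj_compl oW.
have [Y FGW] := inv 1%:M; rewrite mulmx1 oW.1 in FGW.
have W'FGW0 : (1%:M - W) *m Fmap g (Gmap g W) = 0.
  by rewrite FGW !mulmxA mulmxBl mul1mx oW.1 subrr !mul0mx.
have psdGW := Gmap_psd psdg (orth_proj_psd oW).
have psdGW' := Gmap_psd psdg (orth_proj_psd oW').
have GW'GW0 : Gmap g (1%:M - W) *m Gmap g W = 0.
  apply: psd_mul_eq0 => //.
  by rewrite mxtrace_Gmap_mul -mxtrace_mul_Fmap W'FGW0 mxtrace0.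
have [Q [oQ QGW [S GWS]]] := psd_range_proj psdGW.
have QGW'0 : Q *m Gmap g (1%:M - W) = 0.
  rewrite -(orth_proj_herm oQ) GWS adjmxM (proj1 psdGW) -mulmxA.
  by rewrite (herm_mulmx_eq0C (proj1 psdGW') (proj1 psdGW) GW'GW0) mulmx0.
exists Q => //; split; apply: psd_mxtrace_eq0 => //.
  rewrite -(orth_proj_mul_adj (orth_proj_tens oW (orth_proj_compl oQ))).
  by rewrite -mxtrace_Gmap_mul mulmxBr mulmx1 raddfB /= mxtrace_mulC QGW subrr.
rewrite -(orth_proj_mul_adj (orth_proj_tens oW' oQ)).
by rewrite -mxtrace_Gmap_mul mxtrace_mulC QGW'0 mxtrace0.
Qed.

Definition same_rker p (A B : 'M[C]_p) := forall M : 'M[C]_p, A *m M = 0 <-> B *m M = 0.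

Lemma corner_invariant_transfer g g' W : psd g -> adjmx g' = g' -> same_rker g g' ->
  orth_proj W -> corner_invariant (fun X => Fmap g (Gmap g X)) W ->
  corner_invariant (fun X => Fmap g' (Gmap g' X)) W.
Proof.
move=> psdg g'_herm ker oW /(split_of_corner_invariant psdg oW) [Q oQ [gWQ'0 gW'Q0]].
by apply: corner_invariant_of_split g'_herm oW oQ _; split; apply/ker.
Qed.

End CornerInvariance.

Lemma block_diag_comm (R : pzRingType) p l (P : 'I_l -> 'M[R]_p) (P0 A : 'M[R]_p) :
  \sum_i P i + P0 = 1%:M -> A *m P0 = 0 -> P0 *m A = 0 ->
  (forall i j, i != j -> P j *m A *m P i = 0) ->
  forall i, P i *m A = A *m P i.
Proof.
move=> sumP AP0 P0A offdiag i.
have -> : P i *m A = P i *m A *m P i.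
  rewrite -{1}[P i *m A]mulmx1 -sumP mulmxDr -[P i *m A *m P0]mulmxA AP0 mulmx0 addr0.
  by rewrite mulmx_sumr (bigD1 i) //= big1 ?addr0 // => j; apply: offdiag.
rewrite -{1}[A *m P i]mul1mx -sumP mulmxDl [P0 *m _]mulmxA P0A mul0mx addr0.
rewrite mulmx_suml (bigD1 i) //= big1 ?addr0 ?mulmxA // => j j_neq_i.
by rewrite mulmxA offdiag // eq_sym.
Qed.

Section Decomposition.
Variables (C : numClosedFieldType) (k m l : nat) (W : 'I_l -> 'M[C]_k).
Hypotheses (W_proj : forall i, orth_proj (W i))
           (W_orth : forall i j, i != j -> W i *m W j = 0).

Definition vanishes_off_corners (T : 'M[C]_k -> 'M[C]_k) :=
  forall X, (forall i Y, mxdot X (W i *m Y *m W i) = 0) -> T X = 0.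

Let W0 := 1%:M - \sum_j W j.

Lemma orth_proj_W0 : orth_proj W0.
Proof. exact/orth_proj_compl/orth_proj_sum. Qed.

Lemma W0_mul i : W0 *m W i = 0.
Proof. by rewrite mulmxBl mul1mx sum_orth_proj_mull // subrr. Qed.

Lemma sum_tens1_W : \sum_i W i *t (1%:M : 'M[C]_m) + W0 *t 1%:M = 1%:M.
Proof. by rewrite -tensmx_suml -tensmxDl /W0 addrC subrK tensmx11. Qed.

Lemma mxdot_corner_eq0 X i : (forall Y, mxdot X (W i *m Y *m W i) = 0) ->
  W i *m X *m W i = 0.
Proof.
move=> dot0; apply: eq0_mxtrace_mul => N; move: (dot0 (adjmx N)).
rewrite /mxdot !adjmxM adjmxK !(orth_proj_herm (W_proj i)) mulmxA => tr0.
rewrite mxtrace_mulC mulmxA in tr0.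
by rewrite mxtrace_mulC !mulmxA.
Qed.

Section Vanishing.
Variable g : 'M[C]_(k * m).
Hypotheses (psdg : psd g) (vanish : vanishes_off_corners (fun X => Fmap g (Gmap g X))).

Lemma Gmap_eq0_off_corners X :
  (forall i Y, mxdot X (W i *m Y *m W i) = 0) -> Gmap g X = 0.
Proof. by move=> dot0; apply: Gmap_eq0 (proj1 psdg) (vanish dot0). Qed.

Lemma ker_tens1_W0 : g *m (W0 *t 1%:M) = 0.
Proof.
have oP0 := orth_proj_tens orth_proj_W0 (orth_proj1 C m).
apply: psd_mxtrace_eq0 => //; rewrite -(orth_proj_mul_adj oP0) -mxtrace_Gmap_mul.
rewrite Gmap_eq0_off_corners ?mul0mx ?mxtrace0 // => i Y.
by rewrite /mxdot !adjmxM (orth_proj_herm (W_proj i)) !mulmxA W0_mul !mul0mx mxtrace0.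
Qed.

Lemma tens1_W_offdiag i j : i != j ->
  (W j *t 1%:M) *m g *m (W i *t (1%:M : 'M[C]_m)) = 0.
Proof.
move=> i_neq_j; apply: eq0_mxtrace_mul_tens => Y N.
rewrite -!mulmxA mxtrace_mulC -!mulmxA !tensmx_mul -mxtrace_Gmap_mul.
rewrite Gmap_eq0_off_corners ?mul0mx ?mxtrace0 // => s Z.
rewrite /mxdot !adjmxM (orth_proj_herm (W_proj s)) !mulmxA.
have [->|s_neq_j] := eqVneq s j.
  by rewrite mxtrace_mulC !mulmxA W_orth 1?eq_sym // !mul0mx mxtrace0.
by rewrite -[_ *m W j *m W s]mulmxA W_orth 1?eq_sym // mulmx0 !mul0mx mxtrace0.
Qed.

Lemma tens1_W_comm i : (W i *t 1%:M) *m g = g *m (W i *t (1%:M : 'M[C]_m)).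
Proof.
have oP0 := orth_proj_tens orth_proj_W0 (orth_proj1 C m).
apply: (@block_diag_comm _ _ _ (fun j => W j *t (1%:M : 'M[C]_m)) (W0 *t 1%:M) g
  sum_tens1_W ker_tens1_W0).
  exact: herm_mulmx_eq0C (proj1 psdg) (orth_proj_herm oP0) ker_tens1_W0.
exact: tens1_W_offdiag.
Qed.

End Vanishing.

Lemma FG_vanishes_off_corners (g : 'M[C]_(k * m)) : g *m (W0 *t 1%:M) = 0 ->
  (forall i, (W i *t 1%:M) *m g = g *m (W i *t (1%:M : 'M[C]_m))) ->
  vanishes_off_corners (fun X => Fmap g (Gmap g X)).
Proof.
move=> gP0 comm X dot0; have WXW0 i := mxdot_corner_eq0 (dot0 i).
suff -> : Gmap g X = 0.
  by rewrite FmapE; apply/matrixP=> i j; rewrite !mxE mulmx0 mxtrace0.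
apply: eq0_mxtrace_mul => N; rewrite mxtrace_Gmap_mul.
rewrite -[g]mulmx1 -sum_tens1_W mulmxDr mulmx_sumr gP0 addr0 mulmx_suml raddf_sum.
rewrite big1 // => i _.
rewrite -(orth_proj_tens (W_proj i) (orth_proj1 C m)).1 mulmxA -comm.
rewrite /= -[_ *m (X *t N)]mulmxA mxtrace_mulC mulmxA !tensmx_mul.
by rewrite WXW0 tens0mx mul0mx mxtrace0.
Qed.

End Decomposition.

Section Transfer.
Variables (C : numClosedFieldType) (k m : nat).
Implicit Types g : 'M[C]_(k * m).

Lemma same_rker_sym p (A B : 'M[C]_p) : same_rker A B -> same_rker B A.
Proof. by move=> AB M; apply: iff_sym. Qed.

Lemma CR_transfer g g' : CR g -> psd g' -> same_rker g g' ->
  (forall P, orth_proj P -> P *m g = g *m P -> P *m g' = g' *m P) -> CR g'.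
Proof.
move=> [psdg [_ [_ [l [W [W_proj W_orth W_inv W_irr W_van]]]]]] psdg' ker comm.
split=> //; split; first exact: FG_selfadjoint (proj1 psdg').
split; first exact: FG_positive.
exists l, W; split=> //.
- move=> i.
  exact: corner_invariant_transfer psdg (proj1 psdg') ker (W_proj i) (W_inv i).
- move=> i V oV Vsub Vinv; apply: (W_irr i V oV Vsub).
  exact: corner_invariant_transfer psdg' (proj1 psdg) (same_rker_sym ker) oV Vinv.
apply: FG_vanishes_off_corners => // [|i].
  by apply/ker; apply: ker_tens1_W0.
apply: comm; first exact/orth_proj_tens/orth_proj1.
exact: tens1_W_comm.
Qed.

End Transfer.

Section Applications.
Variable C : numClosedFieldType.

Lemma adjmx_exprn p (A : 'M[C]_p) n : adjmx A = A -> adjmx (A ^+ n) = A ^+ n.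
Proof.
move=> A'; elim: n => [|n IHn]; first by rewrite !expr0 adjmx1.
by rewrite {1}exprS -mulmxE adjmxM IHn A' mulmxE -exprSr.
Qed.

Lemma herm_mul_sqr_eq0 p (A M : 'M[C]_p) :
  adjmx A = A -> A *m (A *m M) = 0 -> A *m M = 0.
Proof.
move=> A' AAM0; apply: mxtrace_mul_adj_eq0.
by rewrite mxtrace_mulC adjmxM A' -mulmxA AAM0 mulmx0 mxtrace0.
Qed.

Lemma same_rker_exprn p (A : 'M[C]_p) n : adjmx A = A -> (0 < n)%N ->
  same_rker A (A ^+ n).
Proof.
move=> A'; case: n => // n _ M; split=> [AM0|].
  by rewrite exprSr -mulmxE -mulmxA AM0 mulmx0.
elim: n => [|n IHn AnM0]; first by rewrite expr1.
apply: IHn; apply: herm_mul_sqr_eq0; first exact: adjmx_exprn.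
by rewrite mulmxA mulmxE -exprD addSnnS exprD -mulrA -mulmxE AnM0 mulmx0.
Qed.

Lemma CR_exprn k m (g : 'M[C]_(k * m)) n : CR g -> (0 < n)%N -> CR (g ^+ n).
Proof.
move=> CRg n_gt0; have psdg := proj1 CRg.
apply: CR_transfer CRg (psdX n psdg) (same_rker_exprn (proj1 psdg) n_gt0) _.
by move=> P _ Pg; rewrite !mulmxE; apply/commrX; rewrite /GRing.comm -!mulmxE.
Qed.

Lemma CR_psd_root k m (g r : 'M[C]_(k * m)) n : CR g -> (0 < n)%N ->
  psd r -> r ^+ n = g -> CR r.
Proof.
move=> CRg n_gt0 psdr rng; apply: (CR_transfer CRg psdr).
  by rewrite -rng; apply/same_rker_sym/same_rker_exprn => //; case: psdr.
by move=> P _; rewrite -rng; apply: psd_root_comm.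
Qed.

Lemma submx_tr_factor p q r (A : 'M[C]_(p, q)) (B : 'M[C]_(p, r)) :
  (A^T <= B^T)%MS -> exists S, A = B *m S.
Proof. by move=> /submxP [D AD]; exists D^T; rewrite -[A]trmxK AD trmx_mul trmxK. Qed.

Lemma herm_factor_mul_eq0 p (A B S M : 'M[C]_p) : adjmx A = A -> adjmx B = B ->
  B = A *m S -> A *m M = 0 -> B *m M = 0.
Proof. by move=> A' B' BAS AM0; rewrite -B' BAS adjmxM A' -mulmxA AM0 mulmx0. Qed.

(* With d = g S and g = d g, any hermitian P commuting with g satisfies
   P d = P g S = g P S = d (P g S) = d P d, and taking adjoints d P = d P d. *)
Lemma range_proj_comm p (g d S P : 'M[C]_p) : adjmx g = g -> orth_proj d ->
  d *m g = g -> d = g *m S -> adjmx P = P -> P *m g = g *m P -> P *m d = d *m P.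
Proof.
move=> g' od dg dgS P' Pg.
have PdE : P *m d = d *m (P *m d).
  have PgS : P *m d = g *m P *m S by rewrite dgS mulmxA Pg.
  by rewrite PgS !mulmxA dg.
have dPE : d *m P = d *m (P *m d).
  rewrite -{1}P' -(orth_proj_herm od) -adjmxM PdE !adjmxM P' (orth_proj_herm od).
  by rewrite mulmxA.
by rewrite PdE -dPE.
Qed.

Lemma range_proj_exists p (g : 'M[C]_p) : psd g ->
  exists d : 'M[C]_p, orth_proj d /\ (d^T == g^T)%MS.
Proof.
move=> /psd_range_proj [Q [oQ QgE [S QE]]]; exists Q; split=> //.
by apply/andP; split; [rewrite QE | rewrite -{1}QgE]; rewrite trmx_mul submxMl.
Qed.

Lemma CR_range_proj k m (g d : 'M[C]_(k * m)) : CR g ->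
  orth_proj d -> (d^T == g^T)%MS -> CR d.
Proof.
move=> CRg od /andP [/submx_tr_factor [S dgS] /submx_tr_factor [S' gdS']].
have g' := proj1 (proj1 CRg); have d' := orth_proj_herm od.
apply: CR_transfer CRg (orth_proj_psd od) _ _.
  move=> M; split; first exact: herm_factor_mul_eq0 g' d' dgS.
  exact: herm_factor_mul_eq0 d' g' gdS'.
move=> P oP; apply: (range_proj_comm g' od _ dgS (orth_proj_herm oP)).
by rewrite gdS' mulmxA od.1.
Qed.

End Applications.

Theorem mainTheorem11 (R : realType) (k m n : nat) (g : 'M[R[i]]_(k * m)) :
  CR g -> (1 <= n)%N ->
  [/\ CR (g ^+ n),
      (exists r : 'M[R[i]]_(k * m), psd r /\ r ^+ n = g) /\
      (forall r : 'M[R[i]]_(k * m), psd r -> r ^+ n = g -> CR r) &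
      (exists d : 'M[R[i]]_(k * m), orth_proj d /\ (d^T == g^T)%MS) /\
      (forall d : 'M[R[i]]_(k * m), orth_proj d -> (d^T == g^T)%MS -> CR d)].
Proof.
move=> CRg n_gt0; have psdg := proj1 CRg.
split; first exact: CR_exprn.
  split; first exact: psd_root_exists n_gt0 psdg.
  by move=> r; apply: CR_psd_root.
split; first exact: range_proj_exists psdg.
by move=> d; apply: CR_range_proj.
Qed.
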